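(* Let $\Omega\subseteq\mathbb R^d$ be nonempty open, $A\in\mathcal A(\Omega)$, $b,c\in L^\infty(\Omega;\mathbb C^d)$, $V\in L^1_{\rm loc}(\Omega)$ nonnegative, $\mathbf A=(A,b,c,V)$, and let $r>0$, $\zeta\in\mathbb C\setminus\{0\}$, $X\in\mathbb C^d$. Suppose that for a.e. $x\in\Omega$, $\Gamma_r^{\mathbf A}(x,\xi)\ge0$ for all $\xi\in\mathbb C^d$. Then $\mathbf H^{\mathbf A(x)}_{F_r}[\zeta;X]\ge0$ for a.e. $x\in\Omega$. Moreover, if $\mathbf A\in\mathcal S_r(\Omega)$, then for a.e. $x\in\Omega$, $$\mathbf H^{\mathbf A(x)}_{F_r}[\zeta;X]\ge r\,\mu_r(\mathbf A)\,|\zeta|^{r-2}\big(|X|^2+V(x)|\zeta|^2\big).$$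
   Context: $\langle \xi,\sigma\rangle=\sum_j\xi_j\overline{\sigma_j}$. $\mathcal{A}(\Omega)$: measurable $A:\Omega\to\mathbb{C}^{d\times d}$ with $\lambda,\Lambda>0$ such that $\Re\langle A(x)\xi,\xi\rangle\ge\lambda|\xi|^2$, $|\langle A(x)\xi,\sigma\rangle|\le\Lambda|\xi||\sigma|$ a.e. For $r>0$: $\mathcal{J}_r\xi=\frac r2(\xi+(1-\frac2r)\overline\xi)$, $\Delta_r(A)=\operatorname{ess\,inf}_{x}\min_{|\xi|=1}\Re\langle A(x)\xi,\xi+|1-2/r|\overline\xi\rangle$, $\mathcal A_r(\Omega)=\{A:\Delta_r(A)>0\}$, $\Gamma_r^{\mathbf A}(x,\xi)=\Re\langle A(x)\xi,\mathcal J_r\xi\rangle+\Re\langle b(x)+\mathcal J_rc(x),\xi\rangle+V(x)$, and $\mathcal S_r(\Omega)$ is the set of such quadruples with $A\in\mathcal A_r(\Omega)$, $|b-c|\le M\sqrt V$ a.e. for some $M$, and $\Gamma_r^{\mathbf A}(x,\xi)\ge\mu(|\xi|^2+V(x))$ a.e., all $\xi$, for some $\mu>0$; $\mu_r(\mathbf A)$ is the largest such $\mu$. Real forms: $\mathcal V_d:\mathbb C^d\to\mathbb R^{2d}$, $\mathcal V_d(\xi_1+i\xi_2)=(\xi_1,\xi_2)$; for $A\in\mathbb C^{d\times d}$, $\mathcal M(A)=\begin{bmatrix}\Re A&-\Im A\\ \Im A&\Re A\end{bmatrix}$. For $\phi:\mathbb C\to\mathbb R$ of class $C^2$ near $\zeta$,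 let $D^2\phi(\zeta)$ and $\nabla\phi(\zeta)$ be the Hessian and gradient of $\phi\circ\mathcal V_1^{-1}$ at $\mathcal V_1(\zeta)$. For $A\in\mathbb C^{d\times d}$, $b,c\in\mathbb C^d$, $V\in\mathbb R$, $\mathbf A=(A,b,c,V)$, define $\mathbf H^{\mathbf A}_\phi[\zeta;X]=\langle (D^2\phi(\zeta)\otimes I_{\mathbb R^d})\mathcal V_d(X),\mathcal M(A)\mathcal V_d(X)\rangle_{\mathbb R^{2d}}+\langle (D^2\phi(\zeta)\otimes I_{\mathbb R^d})\mathcal V_d(X),\mathcal V_d(\zeta c)\rangle_{\mathbb R^{2d}}+\langle\nabla\phi(\zeta),\mathcal V_1(\langle X,b\rangle)\rangle_{\mathbb R^2}+\langle\nabla\phi(\zeta),\mathcal V_1(V\zeta)\rangle_{\mathbb R^2}$, where $\otimes$ is the Kronecker product. $F_r(\zeta)=|\zeta|^r$. $\mathbf A(x)=(A(x),b(x),c(x),V(x))$. *)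

From HB Require Import structures.
From mathcomp Require Import all_boot all_order all_algebra.
From mathcomp Require Import all_classical all_reals all_analysis.
From mathcomp Require Import complex.
Import Order.TTheory GRing.Theory Num.Theory.
Import numFieldNormedType.Exports.

Set Implicit Arguments.
Unset Strict Implicit.
Unset Printing Implicit Defensive.

Local Open Scope classical_set_scope.
Local Open Scope ring_scope.

Section Defs.
Variable R : realType.
Local Notation C := (R[i]).
Local Notation cRe := (@complex.Re R).
Local Notation cIm := (@complex.Im R).

Definition cabs (z : C) : R := Num.sqrt (cRe z ^+ 2 + cIm z ^+ 2).

Definition cinner d (xi sg : 'cV[C]_d) : C :=
  \sum_(j < d) xi j ord0 * conjc (sg j ord0).

Definition cvnorm2 d (xi : 'cV[C]_d) : R := \sum_(j < d) cabs (xi j ord0) ^+ 2.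
Definition cvnorm d (xi : 'cV[C]_d) : R := Num.sqrt (cvnorm2 xi).

Definition conjv d (xi : 'cV[C]_d) : 'cV[C]_d := map_mx (@conjc R) xi.

Definition Jr d (r : R) (xi : 'cV[C]_d) : 'cV[C]_d :=
  ((r / 2)%:C)%C *: (xi + ((1 - 2 / r)%:C)%C *: conjv xi).

Definition Gamma d (r : R) (A : 'M[C]_d) (b c : 'cV[C]_d) (V : R)
    (xi : 'cV[C]_d) : R :=
  cRe (cinner (A *m xi) (Jr r xi)) + cRe (cinner (b + Jr r c) xi) + V.

Definition box d (a b : 'I_d -> R) : set 'rV[R]_d :=
  [set x | forall i, a i <= x ord0 i <= b i].
Definition boxvol d (a b : 'I_d -> R) : R := \prod_(i < d) Num.max 0 (b i - a i).

Definition lebesgue_outer d (E : set 'rV[R]_d) : \bar R :=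
  ereal_inf [set s : \bar R | exists a b : nat -> 'I_d -> R,
     E `<=` \bigcup_n box (a n) (b n) /\
     s = (\sum_(0 <= n <oo) (boxvol (a n) (b n))%:E)%E].

Definition lnull d (N : set 'rV[R]_d) : Prop := lebesgue_outer N = 0%E.

Definition ae_in d (Om : set 'rV[R]_d) (P : 'rV[R]_d -> Prop) : Prop :=
  exists N, lnull N /\ forall x, Om x -> ~ N x -> P x.

(* Borel sets of R^d (product sigma-algebra of d copies of R) *)
Definition rV_to_tuple d (x : 'rV[R]_d) : d.-tuple R := [tuple x ord0 i | i < d].
Definition borel_set d (E : set 'rV[R]_d) : Prop :=
  exists B : set (d.-tuple R), measurable B /\ E = (@rV_to_tuple d) @^-1` B.

Definition lmeasurable d (E : set 'rV[R]_d) : Prop :=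
  exists B N, borel_set B /\ lnull N /\ (E `\` B) `|` (B `\` E) `<=` N.

Definition lmeas_fun d (Om : set 'rV[R]_d) (f : 'rV[R]_d -> R) : Prop :=
  forall t : R, lmeasurable (Om `&` [set x | f x < t]).
Definition lmeas_funC d (Om : set 'rV[R]_d) (f : 'rV[R]_d -> C) : Prop :=
  lmeas_fun Om (fun x => cRe (f x)) /\ lmeas_fun Om (fun x => cIm (f x)).

Definition Linf d (Om : set 'rV[R]_d) (b : 'rV[R]_d -> 'cV[C]_d) : Prop :=
  (forall j, lmeas_funC Om (fun x => b x j ord0)) /\
  exists M : R, ae_in Om (fun x => cvnorm (b x) <= M).

(* V in L^1_loc(Omega): measurable and int_K |V| < oo for every compact
   K in Omega; the integral of |V| over K is written via the layer-cake
   formula int_0^oo lambda_d({x in K : |V x| > t}) dt. *)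
Definition L1loc d (Om : set 'rV[R]_d) (V : 'rV[R]_d -> R) : Prop :=
  lmeas_fun Om V /\
  forall K : set 'rV[R]_d, K `<=` Om -> compact K ->
    let level (t : R) : \bar R :=
      lebesgue_outer (K `&` [set x | t < `|V x|]) in
    (\int[@lebesgue_measure R]_(t in `[0%R, +oo[%classic) level t < +oo)%E.

Definition ellA d (Om : set 'rV[R]_d) (A : 'rV[R]_d -> 'M[C]_d) : Prop :=
  (forall i j, lmeas_funC Om (fun x => A x i j)) /\
  exists lam Lam : R, 0 < lam /\ 0 < Lam /\
    ae_in Om (fun x =>
      (forall xi : 'cV[C]_d, lam * cvnorm2 xi <= cRe (cinner (A x *m xi) xi)) /\
      (forall xi sg : 'cV[C]_d,
         cabs (cinner (A x *m xi) sg) <= Lam * cvnorm xi * cvnorm sg)).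

Definition ess_inf_in d (Om : set 'rV[R]_d) (f : 'rV[R]_d -> \bar R) : \bar R :=
  ereal_sup [set y : \bar R | ae_in Om (fun x => (y <= f x)%E)].

Definition Delta_r d (Om : set 'rV[R]_d) (r : R) (A : 'rV[R]_d -> 'M[C]_d)
  : \bar R :=
  ess_inf_in Om (fun x => ereal_inf
    [set (cRe (cinner (A x *m xi)
            (xi + ((`|1 - 2 / r|)%:C)%C *: conjv xi)))%:E
       | xi in [set xi : 'cV[C]_d | cvnorm xi = 1]]).

Definition in_A_r d (Om : set 'rV[R]_d) (r : R) (A : 'rV[R]_d -> 'M[C]_d)
  : Prop := (0 < Delta_r Om r A)%E.

Definition Gamma_coercive d (Om : set 'rV[R]_d) (r : R)
    (A : 'rV[R]_d -> 'M[C]_d) (b c : 'rV[R]_d -> 'cV[C]_d)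
    (V : 'rV[R]_d -> R) (mu : R) : Prop :=
  ae_in Om (fun x => forall xi : 'cV[C]_d,
    mu * (cvnorm2 xi + V x) <= Gamma r (A x) (b x) (c x) (V x) xi).

Definition in_S_r d (Om : set 'rV[R]_d) (r : R)
    (A : 'rV[R]_d -> 'M[C]_d) (b c : 'rV[R]_d -> 'cV[C]_d)
    (V : 'rV[R]_d -> R) : Prop :=
  ellA Om A /\ Linf Om b /\ Linf Om c /\
  L1loc Om V /\ ae_in Om (fun x => 0 <= V x) /\
  in_A_r Om r A /\
  (exists M : R, ae_in Om (fun x => cvnorm (b x - c x) <= M * Num.sqrt (V x))) /\
  (exists2 mu : R, 0 < mu & Gamma_coercive Om r A b c V mu).

Definition mu_r d (Om : set 'rV[R]_d) (r : R)
    (A : 'rV[R]_d -> 'M[C]_d) (b c : 'rV[R]_d -> 'cV[C]_d)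
    (V : 'rV[R]_d -> R) : R :=
  sup [set mu : R | 0 < mu /\ Gamma_coercive Om r A b c V mu].

Definition Vd d (X : 'cV[C]_d) : 'cV[R]_(d + d) :=
  col_mx (map_mx (@complex.Re R) X) (map_mx (@complex.Im R) X).

Definition V1 (z : C) : 'rV[R]_2 := \row_(i < 2) if i == ord0 then cRe z else cIm z.
Definition V1inv (p : 'rV[R]_2) : C := (p ord0 ord0 +i* p ord0 ord_max)%C.

Definition Mform d (A : 'M[C]_d) : 'M[R]_(d + d) :=
  block_mx (map_mx (@complex.Re R) A) (- map_mx (@complex.Im R) A)
           (map_mx (@complex.Im R) A) (map_mx (@complex.Re R) A).

Definition kronI d (D : 'M[R]_2) : 'M[R]_(d + d) :=
  block_mx (D ord0 ord0)%:M (D ord0 ord_max)%:M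
           (D ord_max ord0)%:M (D ord_max ord_max)%:M.

Definition rinner n (u v : 'cV[R]_n) : R := \sum_(i < n) u i ord0 * v i ord0.
Definition rinner2 (u v : 'rV[R]_2) : R := \sum_(i < 2) u ord0 i * v ord0 i.

Definition e2 (i : 'I_2) : 'rV[R]_2 := delta_mx ord0 i.

Definition gradC (phi : C -> R) (z : C) : 'rV[R]_2 :=
  \row_(i < 2) 'D_(e2 i) (phi \o V1inv) (V1 z).
Definition hessC (phi : C -> R) (z : C) : 'M[R]_2 :=
  \matrix_(i < 2, j < 2)
    'D_(e2 j) (fun p => 'D_(e2 i) (phi \o V1inv) p) (V1 z).

Definition Hform d (phi : C -> R) (A : 'M[C]_d) (b c : 'cV[C]_d) (V : R)
    (z : C) (X : 'cV[C]_d) : R :=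
  rinner (kronI d (hessC phi z) *m Vd X) (Mform A *m Vd X)
  + rinner (kronI d (hessC phi z) *m Vd X) (Vd (z *: c))
  + rinner2 (gradC phi z) (V1 (cinner X b))
  + rinner2 (gradC phi z) (V1 ((V%:C)%C * z)).

Definition Fr (r : R) (z : C) : R := cabs z `^ r.

End Defs.

From HB Require Import structures.
From mathcomp Require Import all_boot all_order all_algebra.
From mathcomp Require Import all_classical all_reals all_analysis.
From mathcomp Require Import complex.
From mathcomp Require Import ring.
Import Order.TTheory GRing.Theory Num.Theory.
Import numFieldNormedType.Exports.
Local Open Scope classical_set_scope.
Local Open Scope ring_scope.

(** Since [F_r \o V_1^-1] is the radial function [p |-> |p|^r], its gradient
   at [zeta] is [r |zeta|^(r-2) zeta] and its Hessian is
   [r |zeta|^(r-4) ((r-2) zeta zeta^T + |zeta|^2 I)].  Writing [X = zeta Y],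
   this Hessian maps [zeta Y] to [r |zeta|^(r-2) zeta J_r Y], and every term of
   [H] then factors through [zeta conj(zeta) = |zeta|^2], which yields the
   pointwise identity [H^A_{F_r}[zeta; X] = r |zeta|^r Gamma_r^A(zeta^-1 X)].
   Both claims follow; for the second, [mu_r] is a supremum of admissible
   constants, and coercivity passes to it along a sequence of admissible
   constants converging to it, because countably many null sets have a null
   union. *)

Section DirectionalDerivatives.
Context {R : realType}.

Lemma derive_lineE (V W : normedModType R) (f : V -> W) (a v : V) :
  'D_v f a = 'D_1 (fun h : R => f (h *: v + a)) 0.
Proof.
rewrite /derive; set g1 := fun h => h^-1 *: _; set g2 := fun h => h^-1 *: _.
suff -> : g1 = g2 by [].
by apply/funext => h; rewrite /g1 /g2 /= addr0 scale0r add0r [_%:A]mulr1.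
Qed.

Lemma is_derive_powR_comp (s : R) {f : R -> R} {x df : R} :
  is_derive x 1 f df -> 0 < f x ->
  is_derive x 1 (fun h => f h `^ s) (s * f x `^ (s - 1) * df).
Proof.
move=> fdf fx_gt0; have df_x : derivable f x 1 by case: fdf.
have dpow : derivable (@powR R ^~ s) (f x) 1.
  by apply: derivable_powR; rewrite in_itv /= andbT.
have -> : (fun h => f h `^ s) = (@powR R ^~ s) \o f by [].
split; first by apply/derivable1_diffP/differentiable_comp; exact/derivable1_diffP.
rewrite -derive1E derive1_comp // powR_derive1 ?in_itv /= ?andbT //.
by rewrite derive1E derive_val.
Qed.

Definition sqnorm2 (p : 'rV[R]_2) : R := p ord0 ord0 ^+ 2 + p ord0 ord_max ^+ 2.
Definition dot2 (p q : 'rV[R]_2) : R :=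
  p ord0 ord0 * q ord0 ord0 + p ord0 ord_max * q ord0 ord_max.

Lemma is_derive_sqnorm2_line (p v : 'rV[R]_2) :
  is_derive (0 : R) 1 (fun h => sqnorm2 (h *: v + p)) (2 * dot2 v p).
Proof.
have -> : (fun h => sqnorm2 (h *: v + p)) =
    (fun h => (h * v ord0 ord0 + p ord0 ord0) ^+ 2
              + (h * v ord0 ord_max + p ord0 ord_max) ^+ 2).
  by apply/funext => h; rewrite /sqnorm2 !mxE.
by apply: is_derive_eq; rewrite /dot2 /GRing.scale /=; ring.
Qed.

Lemma is_derive_dot2_line (e p v : 'rV[R]_2) :
  is_derive (0 : R) 1 (fun h => dot2 e (h *: v + p)) (dot2 e v).
Proof.
have -> : (fun h => dot2 e (h *: v + p)) =
    (fun h => e ord0 ord0 * (h * v ord0 ord0 + p ord0 ord0)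
              + e ord0 ord_max * (h * v ord0 ord_max + p ord0 ord_max)).
  by apply/funext => h; rewrite /dot2 !mxE.
by apply: is_derive_eq; rewrite /dot2 /GRing.scale /=; ring.
Qed.

Lemma derive_powR_sqnorm2 (s : R) (p v : 'rV[R]_2) : 0 < sqnorm2 p ->
  'D_v (fun q => sqnorm2 q `^ s) p = s * sqnorm2 p `^ (s - 1) * (2 * dot2 v p).
Proof.
move=> p_gt0; rewrite derive_lineE.
have := is_derive_powR_comp s (is_derive_sqnorm2_line p v).
by rewrite /= scale0r add0r => /(_ p_gt0) Dpow; rewrite derive_val.
Qed.

Lemma derive2_powR_sqnorm2 (s : R) (e p v : 'rV[R]_2) : 0 < sqnorm2 p ->
  'D_v (fun q => 'D_e (fun q' => sqnorm2 q' `^ s) q) p =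
  s * (sqnorm2 p `^ (s - 1) * (2 * dot2 e v)
       + (s - 1) * sqnorm2 p `^ (s - 1 - 1) * (2 * dot2 v p) * (2 * dot2 e p)).
Proof.
move=> p_gt0; rewrite derive_lineE.
have line_p : sqnorm2 (0 *: v + p) = sqnorm2 p by rewrite scale0r add0r.
have line_cvg : (fun h : R => sqnorm2 (h *: v + p)) @ (0 : R) --> sqnorm2 p.
  rewrite -[X in _ --> X]line_p.
  apply: (@differentiable_continuous _ _ _ _ (fun h : R => sqnorm2 (h *: v + p))).
  by apply/derivable1_diffP; case: (is_derive_sqnorm2_line p v).
have near_gt0 := cvgr_gt _ line_cvg _ p_gt0.
rewrite (@near_eq_derive _ _ _ _ (fun h : R =>
    s * (sqnorm2 (h *: v + p) `^ (s - 1) * (2 * dot2 e (h *: v + p))))); last first.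
  near=> h; rewrite derive_powR_sqnorm2 ?mulrA //; near: h; exact: near_gt0.
have Dpow := is_derive_powR_comp (s - 1) (is_derive_sqnorm2_line p v).
rewrite /= line_p in Dpow.
have Ddot := is_deriveZ 2 (is_derive_dot2_line e p v).
have DpowM := is_deriveZ s (is_deriveM (Dpow p_gt0) Ddot).
rewrite derive_val /= line_p scale0r add0r /GRing.scale /=; ring.
Unshelve. all: by end_near.
Qed.

End DirectionalDerivatives.

Section ComplexForms.
Context {R : realType}.
Local Open Scope complex_scope.
Local Notation C := (R[i]).
Local Notation cRe := (@complex.Re R).
Local Notation cIm := (@complex.Im R).

Lemma Re_sum n (F : 'I_n -> C) : cRe (\sum_(j < n) F j) = \sum_(j < n) cRe (F j).
Proof. by elim/big_rec2: _ => //= j y1 y2 _ <-; case: (F j); case: y2. Qed.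

Lemma Im_sum n (F : 'I_n -> C) : cIm (\sum_(j < n) F j) = \sum_(j < n) cIm (F j).
Proof. by elim/big_rec2: _ => //= j y1 y2 _ <-; case: (F j); case: y2. Qed.

Lemma ReD (u w : C) : cRe (u + w) = cRe u + cRe w.
Proof. by case: u; case: w. Qed.

Lemma ReM_real (k : R) (w : C) : cRe (k%:C * w) = k * cRe w.
Proof. by case: w => x y /=; ring. Qed.

Lemma sqr_cabs (z : C) : cabs z ^+ 2 = cRe z ^+ 2 + cIm z ^+ 2.
Proof. by rewrite sqr_sqrtr // addr_ge0 // sqr_ge0. Qed.

Lemma conjc_realM (k : R) (w : C) : conjc (k%:C * w) = k%:C * conjc w.
Proof. by case: w => x y /=; congr (_ +i* _); ring. Qed.

Lemma cabs_gt0 {z : C} : z != 0 -> 0 < cabs z.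
Proof.
case: z => a b; rewrite eq_complex negb_and /cabs sqrtr_gt0 /= => /orP[] ab0.
  by rewrite ltr_pwDl ?sqr_ge0 // exprn_even_gt0.
by rewrite ltr_pwDr ?sqr_ge0 // exprn_even_gt0.
Qed.

Lemma mulcJ (z : C) : z * conjc z = (cabs z ^+ 2)%:C.
Proof. by rewrite sqr_cabs; case: z => a b /=; congr (_ +i* _); ring. Qed.

Lemma sqr_cabsM (u w : C) : cabs (u * w) ^+ 2 = cabs u ^+ 2 * cabs w ^+ 2.
Proof. by rewrite !sqr_cabs; case: u => a b; case: w => x y /=; ring. Qed.

Lemma sqr_cabsV (z : C) : z != 0 -> cabs z^-1 ^+ 2 = (cabs z ^+ 2)^-1.
Proof.
move=> /cabs_gt0 /(exprn_gt0 2); rewrite !sqr_cabs.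
by case: z => a b /= n_gt0; field; rewrite gt_eqF.
Qed.

Lemma cvnorm2Z d (a : C) (X : 'cV[C]_d) :
  cvnorm2 (a *: X) = cabs a ^+ 2 * cvnorm2 X.
Proof.
by rewrite /cvnorm2 mulr_sumr; apply: eq_bigr => j _; rewrite mxE sqr_cabsM.
Qed.

Section Inner.
Variable d : nat.
Implicit Types (u v w : 'cV[C]_d).

Lemma cinnerZl (a : C) u v : cinner (a *: u) v = a * cinner u v.
Proof. by rewrite /cinner mulr_sumr; apply: eq_bigr => j _; rewrite mxE mulrA. Qed.

Lemma cinnerZr (a : C) u v : cinner u (a *: v) = conjc a * cinner u v.
Proof.
rewrite /cinner mulr_sumr; apply: eq_bigr => j _.
by rewrite mxE rmorphM /= mulrCA.
Qed.

Lemma cinnerDl u v w : cinner (u + v) w = cinner u w + cinner v w.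
Proof. by rewrite /cinner -big_split; apply: eq_bigr => j _; rewrite mxE mulrDl. Qed.

Lemma conj_cinner u v : conjc (cinner u v) = cinner v u.
Proof.
rewrite /cinner rmorph_sum; apply: eq_bigr => j _.
by rewrite rmorphM /= conjcK mulrC.
Qed.

Lemma Re_cinnerC u v : cRe (cinner u v) = cRe (cinner v u).
Proof.
rewrite /cinner !Re_sum; apply: eq_bigr => j _.
by case: (u j ord0) => a b; case: (v j ord0) => x y /=; ring.
Qed.

Lemma Re_cinner_Jr (r : R) u v : cRe (cinner u (Jr r v)) = cRe (cinner (Jr r u) v).
Proof.
rewrite /cinner !Re_sum; apply: eq_bigr => j _; rewrite /Jr /conjv !mxE.
by case: (u j ord0) => a b; case: (v j ord0) => x y /=; ring.
Qed.

End Inner.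
End ComplexForms.

Section RealForms.
Context {R : realType}.
Local Open Scope complex_scope.
Local Notation C := (R[i]).
Local Notation cRe := (@complex.Re R).
Local Notation cIm := (@complex.Im R).
Variable d : nat.

Lemma rinner_col m n (u1 v1 : 'cV[R]_m) (u2 v2 : 'cV[R]_n) :
  rinner (col_mx u1 u2) (col_mx v1 v2) = rinner u1 v1 + rinner u2 v2.
Proof.
by rewrite /rinner big_split_ord /=; congr (_ + _); apply: eq_bigr => i _;
  rewrite ?col_mxEu ?col_mxEd.
Qed.

Lemma rinner_Vd (u w : 'cV[C]_d) : rinner (Vd u) (Vd w) = cRe (cinner u w).
Proof.
rewrite rinner_col /rinner /cinner Re_sum -big_split; apply: eq_bigr => j _.
by rewrite !mxE; case: (u j ord0) => a b; case: (w j ord0) => x y /=; ring.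
Qed.

Lemma Mform_Vd (A : 'M[C]_d) (X : 'cV[C]_d) : Mform A *m Vd X = Vd (A *m X).
Proof.
rewrite /Mform /Vd mul_block_col mulNmx; congr col_mx; apply/matrixP => i j;
  rewrite !mxE ?Re_sum ?Im_sum; [rewrite -sumrB | rewrite -big_split];
  apply: eq_bigr => k _; rewrite !mxE;
  by case: (A i k) => a b; case: (X k j) => x y /=; ring.
Qed.

Lemma rinner2_V1 (u w : C) : rinner2 (V1 u) (V1 w) = cRe (u * conjc w).
Proof.
rewrite /rinner2 big_ord_recl big_ord1 !mxE /=.
by case: u => a b; case: w => x y /=; ring.
Qed.

Lemma kronI_Vd (h : 'M[R]_2) (X : 'cV[C]_d) :
  kronI d h *m Vd X =
  col_mx (h ord0 ord0 *: map_mx cRe X + h ord0 ord_max *: map_mx cIm X)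
         (h ord_max ord0 *: map_mx cRe X + h ord_max ord_max *: map_mx cIm X).
Proof. by rewrite /kronI /Vd mul_block_col !mul_scalar_mx. Qed.

Lemma kronI_radial_Vd (k r : R) (z : C) (X : 'cV[C]_d) : r != 0 -> z != 0 ->
  kronI d (k *: ((r - 2) *: ((V1 z)^T *m V1 z) + (cabs z ^+ 2)%:M)) *m Vd X =
  Vd ((k * cabs z ^+ 2)%:C *: (z *: Jr r (z^-1 *: X))).
Proof.
move=> r0 z0; move: (z0) => /cabs_gt0 /(exprn_gt0 2); rewrite sqr_cabs => n_gt0.
rewrite kronI_Vd /Vd; congr col_mx; apply/matrixP => i j;
  rewrite !mxE !big_ord1 !mxE /=;
  case: z z0 n_gt0 => a b _ /= n_gt0; case: (X i j) => x y /=;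
  by field; rewrite r0 gt_eqF.
Qed.
End RealForms.

Section RadialDerivatives.
Context {R : realType}.
Local Open Scope complex_scope.
Local Notation C := (R[i]).

Lemma powR_sqr_half (x s : R) : 0 <= x -> (x ^+ 2) `^ (s / 2) = x `^ s.
Proof. by move=> x0; rewrite -powR_mulrn // -powRrM mulrC divfK ?pnatr_eq0. Qed.

Lemma powR_addn2 (x s : R) : 0 < x -> x `^ (s + 2) = x `^ s * x ^+ 2.
Proof.
move=> x0; rewrite powRD ?powR_mulrn ?ltW //.
by apply/implyP => _; rewrite gt_eqF.
Qed.

Lemma sqnorm2_V1 (z : C) : sqnorm2 (V1 z) = cabs z ^+ 2.
Proof. by rewrite sqr_cabs /sqnorm2 !mxE. Qed.

Lemma Fr_V1inv (r : R) : Fr r \o @V1inv R = (fun q => sqnorm2 q `^ (r / 2)).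
Proof.
apply/funext => q; rewrite /= /Fr -powR_sqr_half ?sqrtr_ge0 //.
by rewrite sqr_cabs /sqnorm2.
Qed.

Lemma dot2_e2 (i : 'I_2) (p : 'rV[R]_2) : dot2 (@e2 R i) p = p ord0 i.
Proof.
have [->|->] : i = ord0 \/ i = ord_max.
  by case: i => -[|[|//]] i2; [left | right]; apply: val_inj.
all: by rewrite /dot2 /e2 !mxE /=; ring.
Qed.

Lemma gradC_Fr (r : R) (z : C) : z != 0 ->
  gradC (Fr r) z = V1 ((r * cabs z `^ (r - 2))%:C * z).
Proof.
move=> /cabs_gt0 z_gt0; apply/rowP => i.
rewrite !mxE Fr_V1inv derive_powR_sqnorm2 ?sqnorm2_V1 ?exprn_gt0 // dot2_e2.
have -> : r / 2 - 1 = (r - 2) / 2 by field.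
rewrite powR_sqr_half ?ltW // !mxE.
move: (cabs z `^ (r - 2)) => t.
by case: ifP => _; case: z {z_gt0} => a b /=; field.
Qed.

Lemma hessC_Fr (r : R) (z : C) : z != 0 ->
  hessC (Fr r) z =
  (r * cabs z `^ (r - 4)) *: ((r - 2) *: ((V1 z)^T *m V1 z) + (cabs z ^+ 2)%:M).
Proof.
move=> /cabs_gt0 z_gt0; apply/matrixP => i j.
rewrite !mxE Fr_V1inv derive2_powR_sqnorm2 ?sqnorm2_V1 ?exprn_gt0 // !dot2_e2.
have -> : r / 2 - 1 = (r - 4 + 2) / 2 by field.
have -> : (r - 4 + 2) / 2 - 1 = (r - 4) / 2 by field.
rewrite !powR_sqr_half ?ltW // powR_addn2 // big_ord1 !mxE /= -mulr_natr.
move: (cabs z `^ (r - 4)) (if i == ord0 then _ else _) (if j == ord0 then _ else _).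
by move=> t zi zj; field.
Qed.

End RadialDerivatives.

Section RadialHessian.
Context {R : realType}.
Local Open Scope complex_scope.
Local Notation C := (R[i]).
Local Notation cRe := (@complex.Re R).
Variable d : nat.

Lemma Hform_Fr (r : R) (z : C) (A : 'M[C]_d) (b c : 'cV[C]_d) (V : R)
    (X : 'cV[C]_d) : 0 < r -> z != 0 ->
  Hform (Fr r) A b c V z X = r * Fr r z * Gamma r A b c V (z^-1 *: X).
Proof.
move=> r_gt0 z0; have r0 := lt0r_neq0 r_gt0; have z_gt0 := cabs_gt0 z0.
set n := cabs z ^+ 2; set k := r * cabs z `^ (r - 4); set Y := z^-1 *: X.
have XE : X = z *: Y by rewrite /Y scalerA mulfV // scale1r.
have zJ : z * conjc z = n%:C by rewrite mulcJ.
have grad_coef : r * cabs z `^ (r - 2) = k * n.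
  by rewrite /k -mulrA -powR_addn2 //; congr (_ * _ `^ _); ring.
have Fr_coef : r * Fr r z = k * n * n.
  by rewrite /Fr -grad_coef -mulrA -powR_addn2 // subrK.
have A_term : cRe (cinner ((k * n)%:C *: (z *: Jr r Y)) (A *m X)) =
          k * n * n * cRe (cinner (A *m Y) (Jr r Y)).
  rewrite XE -scalemxAr 2!cinnerZl cinnerZr [z * _]mulrA zJ mulrA -rmorphM.
  by rewrite ReM_real Re_cinnerC.
have c_term : cRe (cinner ((k * n)%:C *: (z *: Jr r Y)) (z *: c)) =
          k * n * n * cRe (cinner (Jr r c) Y).
  rewrite 2!cinnerZl cinnerZr [z * _]mulrA zJ mulrA -rmorphM.
  by rewrite ReM_real Re_cinnerC Re_cinner_Jr.
have b_term : cRe ((k * n)%:C * z * conjc (cinner X b)) = k * n * n * cRe (cinner b Y).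
  rewrite conj_cinner XE cinnerZr -mulrA [z * _]mulrA zJ mulrA -rmorphM.
  by rewrite ReM_real.
have V_term : cRe ((k * n)%:C * z * conjc (V%:C * z)) = k * n * n * V.
  rewrite conjc_realM -mulrA [z * _]mulrCA zJ -!rmorphM /=.
  by rewrite mulrA mulrAC.
rewrite /Hform hessC_Fr // gradC_Fr // grad_coef kronI_radial_Vd // -/n -/k -/Y.
rewrite Mform_Vd !rinner_Vd !rinner2_V1 Fr_coef /Gamma cinnerDl !ReD.
by rewrite A_term c_term b_term V_term; ring.
Qed.
End RadialHessian.

Section NullSets.
Context {R : realType} {d : nat}.

Lemma boxvol_ge0 (a b : 'I_d -> R) : 0 <= boxvol a b.
Proof. by apply: prodr_ge0 => i _; rewrite le_max lexx. Qed.

Lemma lebesgue_outer_ge0 (E : set 'rV[R]_d) : (0 <= lebesgue_outer E)%E.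
Proof.
apply: le_ereal_inf_tmp => _ [a [b [_ ->]]].
by apply: nneseries_ge0 => n _ _; rewrite lee_fin boxvol_ge0.
Qed.

Lemma nneseries_pair (g : nat * nat -> \bar R)
    (f : {bij [set: nat] >-> [set: nat * nat]}) :
  (forall ij, 0 <= g ij)%E ->
  (\sum_(0 <= k <oo) g (f k) = \sum_(0 <= i <oo) \sum_(0 <= j <oo) g (i, j))%E.
Proof.
move=> g0; rewrite -(esum_pred_image g _ xpredT) ?[fun=> _]set_true// image_eq.
rewrite nneseries_esumT; last by move=> i; exact: nneseries_ge0.
rewrite (eq_esum (b := fun i => \esum_(j in [set: nat]) g (i, j))); last first.
  by move=> i _; rewrite nneseries_esumT.
rewrite esum_esum //.
have -> : [set: nat] `*`` (fun=> [set: nat]) = [set: nat * nat] by apply/seteqP; split.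
by apply: eq_esum => -[i j].
Qed.

Lemma lnull_bigcup (N : nat -> set 'rV[R]_d) :
  (forall n, lnull (N n)) -> lnull (\bigcup_n N n).
Proof.
move=> N0; apply/eqP; rewrite eq_le lebesgue_outer_ge0 andbT.
apply/lee_addgt0Pr => e e0; rewrite add0e.
pose cover n (ab : (nat -> 'I_d -> R) * (nat -> 'I_d -> R)) :=
  N n `<=` \bigcup_k box (ab.1 k) (ab.2 k) /\
  (\sum_(0 <= k <oo) (boxvol (ab.1 k) (ab.2 k))%:E <= (e / (2 ^ n.+1)%:R)%:E)%E.
have [G coverG] : {G & forall n, cover n (G n)}.
  apply: (@choice _ _ cover) => n.
  have : (lebesgue_outer (N n) < (e / (2 ^ n.+1)%:R)%:E)%E.
    by rewrite N0 lte_fin divr_gt0.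
  move=> /ereal_inf_lt [_ [a [b [Nab ->]]] lt].
  by exists (a, b); split => //; exact: ltW.
have /card_esym/ppcard_eqP[f] := card_nat2.
pose g (ij : nat * nat) := (boxvol ((G ij.1).1 ij.2) ((G ij.1).2 ij.2))%:E.
apply: (@le_trans _ _ (\sum_(0 <= k <oo) g (f k))%E).
  apply: ereal_inf_lbound.
  exists (fun k => (G (f k).1).1 (f k).2), (fun k => (G (f k).1).2 (f k).2).
  split => // x [i _ /(coverG i).1 [j _ Bx]].
  by exists (f^-1%FUN (i, j)) => //=; rewrite invK ?inE.
rewrite nneseries_pair; last by move=> ij; rewrite lee_fin boxvol_ge0.
apply: le_trans (epsilon_trick0 _ (ltW e0)).
apply: lee_nneseries => [i _ _|i _]; last exact: (coverG i).2.
by apply: nneseries_ge0 => j _ _; rewrite lee_fin boxvol_ge0.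
Qed.

Lemma ae_countable {Om : set 'rV[R]_d} {P : nat -> 'rV[R]_d -> Prop} :
  (forall k, ae_in Om (P k)) -> ae_in Om (fun x => forall k, P k x).
Proof.
move=> /choice[N NP]; exists (\bigcup_k N k); split.
  by apply: lnull_bigcup => k; exact: (NP k).1.
by move=> x Omx notNx k; apply: (NP k).2 => // Nx; apply: notNx; exists k.
Qed.

End NullSets.

Lemma cvg_to_sup {R : realType} {S : set R} :
  has_sup S -> exists2 u : nat -> R, (forall k, S (u k)) & u @ \oo --> sup S.
Proof.
move=> supS.
have /choice[u Su] : forall k, exists mu, S mu /\ sup S - harmonic k < mu.
  by move=> k; have [mu ? ?] := sup_adherent (harmonic_gt0 k) supS; exists mu.
exists u => [k|]; first exact: (Su k).1.
apply: (@squeeze_cvgr _ _ _ _ (fun k => sup S - harmonic k) (cst (sup S))).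
- by near=> k; rewrite ltW ?(Su k).2 //= sup_upper_bound //; exact: (Su k).1.
- by rewrite -[X in _ --> X]subr0; apply: cvgB; [exact: cvg_cst | exact: cvg_harmonic].
- exact: cvg_cst.
Unshelve. all: by end_near.
Qed.

Section Coercivity.
Context {R : realType} {d : nat} {Om : set 'rV[R]_d} {r : R}.
Context {A : 'rV[R]_d -> 'M[R[i]]_d} {b c : 'rV[R]_d -> 'cV[R[i]]_d}.
Context {V : 'rV[R]_d -> R}.

Lemma Gamma_coercive_sup {S : set R} :
  has_sup S -> (forall mu, S mu -> Gamma_coercive Om r A b c V mu) ->
  Gamma_coercive Om r A b c V (sup S).
Proof.
move=> supS coerS; have [u Su u_sup] := cvg_to_sup supS.
have [N [N0 Nu]] := ae_countable (fun k => coerS _ (Su k)).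
exists N; split => // x Omx notNx xi.
apply: (@cvgr_to_le _ \oo _ _ (fun k => u k * (cvnorm2 xi + V x))).
  exact: cvgMl u_sup.
by near=> k; exact: Nu.
Unshelve. all: by end_near.
Qed.

End Coercivity.

Theorem proposition4p2 (R : realType) (d : nat) (Om : set 'rV[R]_d)
  (A : 'rV[R]_d -> 'M[R[i]]_d) (b c : 'rV[R]_d -> 'cV[R[i]]_d)
  (V : 'rV[R]_d -> R) (r : R) (z : R[i]) (X : 'cV[R[i]]_d) :
  Om !=set0 -> open Om ->
  ellA Om A -> Linf Om b -> Linf Om c ->
  L1loc Om V -> ae_in Om (fun x => 0 <= V x) ->
  0 < r -> z != 0 ->
  ae_in Om (fun x => forall xi : 'cV[R[i]]_d,
                      0 <= Gamma r (A x) (b x) (c x) (V x) xi) ->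
  ae_in Om (fun x => 0 <= Hform (Fr r) (A x) (b x) (c x) (V x) z X) /\
  (in_S_r Om r A b c V ->
   ae_in Om (fun x =>
     r * mu_r Om r A b c V * cabs z `^ (r - 2)
       * (cvnorm2 X + V x * cabs z ^+ 2)
     <= Hform (Fr r) (A x) (b x) (c x) (V x) z X)).
Proof.
move=> _ _ _ _ _ _ _ r_gt0 z0 [N [N0 Gamma_ge0]].
have rFr_ge0 : 0 <= r * Fr r z by rewrite mulr_ge0 ?powR_ge0 ?ltW.
have H_ge0 x : Om x -> ~ N x -> 0 <= Hform (Fr r) (A x) (b x) (c x) (V x) z X.
  by move=> Omx notNx; rewrite Hform_Fr // mulr_ge0 ?Gamma_ge0.
split => [|_]; first by exists N.
(* Outside the bounded nonempty case, [mu_r = 0] by the convention on [sup], so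
   membership in [S_r] is not needed; nor are the regularity hypotheses, since
   [Hform_Fr] is a pointwise identity. *)
have [supS|/sup_out mu0] :=
  pselect (has_sup [set mu | 0 < mu /\ Gamma_coercive Om r A b c V mu]); last first.
  by exists N; split => // x Omx notNx; rewrite /mu_r mu0 mulr0 !mul0r; exact: H_ge0.
have [M [M0 coerM]] := Gamma_coercive_sup supS (fun _ admissible => admissible.2).
exists M; split => // x Omx notNx; rewrite Hform_Fr //.
have z_gt0 := cabs_gt0 z0.
have -> : r * mu_r Om r A b c V * cabs z `^ (r - 2) * (cvnorm2 X + V x * cabs z ^+ 2)
          = r * Fr r z * (mu_r Om r A b c V * (cvnorm2 (z^-1 *: X) + V x)).
  rewrite cvnorm2Z sqr_cabsV // /Fr -[in cabs z `^ r](subrK 2 r) powR_addn2 //.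
  by field; rewrite gt_eqF ?exprn_gt0.
by apply: (ler_wpM2l rFr_ge0); exact: coerM.
Qed.
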